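(* Let $\rho^A$ be a state, $R$ a reference system with $|\psi\rangle^{RA}$ a purification of $\rho^A$, and $\{\Lambda_x^A\}$ a POVM on $A$. Let \[ \sigma^{XR}:=\sum_xP_X(x)|x\rangle\langle x|^X\otimes\rho_x^R,\qquad P_X(x)=\operatorname{Tr}[\Lambda_x\rho],\quad \rho_x^R:=\frac{1}{\operatorname{Tr}[\Lambda_x\rho]}\big(\sqrt\rho\,\Lambda_x^T\sqrt\rho\big)^R . \] Then for any $0<\varepsilon\le\frac14$ and $0<\varepsilon'\le\min\{\frac\varepsilon3,\frac14\}$, \[ {}^{1}I_{\max}^{\varepsilon}(X:R)_{\sigma}\le\widetilde{H}_{\max}^{O(\varepsilon^2)}(A)_\rho-O(\log\varepsilon), \] \[ I_{\max}^{2\varepsilon}(X:R)_{\sigma}\le\widetilde{H}_{\max}^{O(\varepsilon^2)}(A)_\rho-O(\log\varepsilon)+O\Big(\log\frac{\varepsilon'^2}{12}\Big). \]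
   Context: Logs base 2; $O(\cdot)$ terms are bounded by universal constants times the indicated expressions. $\mathcal{B}^\delta(\rho)$: subnormalized states within purified distance $\delta$ of $\rho$ (using generalized fidelity $F(\rho,\sigma)=\|\sqrt\rho\sqrt\sigma\|_1+\sqrt{(1-\operatorname{Tr}\rho)(1-\operatorname{Tr}\sigma)}$). $D_{\max}(\rho\|\sigma)=\min\{\lambda:\rho\le2^\lambda\sigma\}$. $I_{\max}(A:B)_\rho:=D_{\max}(\rho^{AB}\|\rho^A\otimes\rho^B)$, $I_{\max}^\delta(A:B)_\rho:=\min_{\tilde\rho\in\mathcal{B}^\delta(\rho)}I_{\max}(A:B)_{\tilde\rho}$. Modified max-information: ${}^1I_{\max}(A:B)_\rho:=\min_{\sigma^B\text{ state}}D_{\max}(\rho^{AB}\|\rho^A\otimes\sigma^B)$, ${}^1I_{\max}^\delta(A:B)_\rho:=\min_{\rho'\in\mathcal{B}^\delta(\rho)}{}^1I_{\max}(A:B)_{\rho'}$. $\widetilde{H}_{\max}^\delta(A)_\rho:=\log|\operatorname{supp}(\rho')|$ where $\rho'$ is $\rho$ with its smallest eigenvalues summing to at most $\delta$ set to zero. The transpose $\Lambda_x^T$ is taken in the eigenbasis of $\rho$ used to define the purification. *)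

From HB Require Import structures.
From mathcomp Require Import all_boot all_order all_algebra.
From mathcomp Require Import sesquilinear spectral.
From mathcomp Require Import complex mxtens.
From mathcomp Require Import boolp classical_sets reals ereal exp.

Set Implicit Arguments.
Unset Strict Implicit.
Unset Printing Implicit Defensive.

Import Order.TTheory GRing.Theory Num.Theory Num.Def.
Local Open Scope ring_scope.
Local Open Scope complex_scope.

Section Quantum.
Variable R : realType.
Local Notation C := (R[i]).

Definition reC (z : C) : R := complex.Re z.

Definition adj {m n} (A : 'M[C]_(m, n)) : 'M[C]_(n, m) := map_mx conjC (A ^T).

Definition psdmx {n} (A : 'M[C]_n) : Prop :=
  adj A = A /\ forall v : 'rV[C]_n, 0 <= (v *m A *m adj v) 0 0.
Definition loewner_le {n} (A B : 'M[C]_n) : Prop := psdmx (B - A).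

Definition trR {n} (A : 'M[C]_n) : R := reC (\tr A).

Definition state {n} (rho : 'M[C]_n) : Prop := psdmx rho /\ \tr rho = 1.
Definition substate {n} (rho : 'M[C]_n) : Prop := psdmx rho /\ trR rho <= 1.

Definition povm {n k} (Lam : 'I_k -> 'M[C]_n) : Prop :=
  (forall x, psdmx (Lam x)) /\ \sum_(x < k) Lam x = 1%:M.

Definition sqrtm {n} (A : 'M[C]_n) : 'M[C]_n :=
  xget 0 [set B : 'M[C]_n | psdmx B /\ B *m B = A].

Definition trnorm {n} (M : 'M[C]_n) : R := trR (sqrtm (adj M *m M)).

Definition gfid {n} (rho sigma : 'M[C]_n) : R :=
  trnorm (sqrtm rho *m sqrtm sigma) + Num.sqrt ((1 - trR rho) * (1 - trR sigma)).
Definition purified_dist {n} (rho sigma : 'M[C]_n) : R :=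
  Num.sqrt (1 - gfid rho sigma ^+ 2).

Definition sball {n} (delta : R) (rho : 'M[C]_n) : set 'M[C]_n :=
  [set rho' | substate rho' /\ purified_dist rho rho' <= delta].

Definition log2 (x : R) : R := ln x / ln 2.

Definition Dmax {n} (rho sigma : 'M[C]_n) : \bar R :=
  ereal_inf [set (l%:E)%E | l in [set l : R | loewner_le rho ((2 `^ l)%:C *: sigma)]].

(* partial traces on a bipartite system A (dim m) (x) B (dim n), index
   (i,j) |-> mxtens_index (i,j), consistent with tensmx *)
Definition ptrB {m n} (M : 'M[C]_(m * n)) : 'M[C]_m :=
  \matrix_(i, k) \sum_(j < n) M (mxtens_index (i, j)) (mxtens_index (k, j)).
Definition ptrA {m n} (M : 'M[C]_(m * n)) : 'M[C]_n :=
  \matrix_(j, l) \sum_(i < m) M (mxtens_index (i, j)) (mxtens_index (i, l)).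

Definition Imax {m n} (rho : 'M[C]_(m * n)) : \bar R :=
  Dmax rho (ptrB rho *t ptrA rho).
Definition Imax_s {m n} (delta : R) (rho : 'M[C]_(m * n)) : \bar R :=
  ereal_inf [set Imax rho' | rho' in sball delta rho].

Definition Imax1 {m n} (rho : 'M[C]_(m * n)) : \bar R :=
  ereal_inf [set Dmax rho (ptrB rho *t sigma) | sigma in [set sigma : 'M[C]_n | state sigma]].
Definition Imax1_s {m n} (delta : R) (rho : 'M[C]_(m * n)) : \bar R :=
  ereal_inf [set Imax1 rho' | rho' in sball delta rho].

(* eigendecomposition: rho = U^* diag(lam) U with U unitary (the rows of U are
   the conjugates of an orthonormal eigenbasis of rho) *)
Definition eigdec {n} (rho U : 'M[C]_n) (lam : 'rV[R]_n) : Prop :=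
  U \is unitarymx /\ rho = adj U *m diag_mx (map_mx (fun x => x%:C) lam) *m U.

(* \tilde H_max^delta(A)_rho : log |supp rho'|, where rho' is rho with its
   smallest eigenvalues summing to at most delta set to zero *)
Definition chosen_eig {n} (rho : 'M[C]_n) : 'M[C]_n * 'rV[R]_n :=
  xget (0, 0) [set p | eigdec rho p.1 p.2].

Definition trunc_state {n} (delta : R) (rho : 'M[C]_n) : 'M[C]_n :=
  let U := (chosen_eig rho).1 in
  let lam := (chosen_eig rho).2 in
  let s := sort (fun i j : 'I_n => lam 0 i <= lam 0 j) (enum 'I_n) in
  (* largest number of smallest eigenvalues whose sum is at most delta *)
  let mm := \big[maxn/0%N]_(j < n.+1 | \sum_(i <- take j s) lam 0 i <= delta) (j : nat) in
  let zeroed := take mm s in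
  let lam' := \row_i (if i \in zeroed then 0 else lam 0 i) in
  adj U *m diag_mx (map_mx (fun x => x%:C) lam') *m U.

Definition Hmaxt {n} (delta : R) (rho : 'M[C]_n) : \bar R :=
  let r := \rank (trunc_state delta rho) in
  if r == 0%N then -oo%E else ((log2 r%:R)%:E)%E.

(* transpose of Lam in the eigenbasis of rho given by U *)
Definition trE {n} (U L : 'M[C]_n) : 'M[C]_n := adj U *m (U *m L *m adj U)^T *m U.

Definition PX {n k} (rho : 'M[C]_n) (Lam : 'I_k -> 'M[C]_n) (x : 'I_k) : R :=
  trR (Lam x *m rho).

Definition rhoxR {n k} (rho U : 'M[C]_n) (Lam : 'I_k -> 'M[C]_n) (x : 'I_k)
  : 'M[C]_n :=
  ((PX rho Lam x)^-1)%:C *: (sqrtm rho *m trE U (Lam x) *m sqrtm rho).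

Definition sigmaXR {n k} (rho U : 'M[C]_n) (Lam : 'I_k -> 'M[C]_n)
  : 'M[C]_(k * n) :=
  \sum_(x < k) (delta_mx x x *t ((PX rho Lam x)%:C *: rhoxR rho U Lam x)).

End Quantum.

From HB Require Import structures.
From mathcomp Require Import all_boot all_order all_algebra.
From mathcomp Require Import sesquilinear spectral.
From mathcomp Require Import complex mxtens.
From mathcomp Require Import boolp classical_sets reals ereal exp.
From mathcomp Require Import ring lra.

Set Implicit Arguments.
Unset Strict Implicit.
Unset Printing Implicit Defensive.

Import Order.TTheory GRing.Theory Num.Theory Num.Def.
Local Open Scope complex_scope.
Local Open Scope ring_scope.

(* Write sigma^XR = sum_x |x><x| (x) B_x with B_x = sqrt rho Lam_x^T sqrt rho >= 0
   and sum_x B_x = rho; only this classical-quantum structure is used.  Let d be the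
   rank of the truncation of rho at delta = c eps^2 and Pi the spectral projector of
   rho onto the eigenvalues >= theta := delta / d.  The eigenvalues below theta weigh
   at most 2 delta: the truncated ones weigh at most delta, and at most d others
   survive, each below theta.  So sigma' := (1 (x) Pi) sigma (1 (x) Pi) has trace
   t >= 1 - 2 delta, and as F(sigma, P sigma P) = Tr (P sigma P) for a projector P,
   sigma' lies in the (2 sqrt delta)-ball around sigma.  Finally
   Pi B_x Pi <= Tr (Pi B_x Pi) Pi <= theta^-1 Tr (Pi B_x Pi) Pi rho Pi, that is
   sigma' <= theta^-1 sigma'^X (x) sigma'^R, whence I_max(X:R)_sigma' <= log (d / delta);
   the same bound holds for ^1 I_max with the state Pi rho Pi / t since t <= 1. *)

Section MaxInformation.
Variable R : realType.
Local Notation C := R[i].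

(** * Adjoints and positive semidefinite matrices *)

Lemma adjK m n (A : 'M[C]_(m, n)) : adj (adj A) = A.
Proof. exact: trmxCK. Qed.

Lemma adj_mul m n p (A : 'M[C]_(m, n)) (B : 'M[C]_(n, p)) :
  adj (A *m B) = adj B *m adj A.
Proof. by rewrite /adj trmx_mul map_mxM. Qed.

Lemma adjD m n (A B : 'M[C]_(m, n)) : adj (A + B) = adj A + adj B.
Proof. by apply/matrixP => i j; rewrite !mxE rmorphD. Qed.

Lemma adjN m n (A : 'M[C]_(m, n)) : adj (- A) = - adj A.
Proof. by apply/matrixP => i j; rewrite !mxE rmorphN. Qed.

Lemma adjB m n (A B : 'M[C]_(m, n)) : adj (A - B) = adj A - adj B.
Proof. by rewrite adjD adjN. Qed.

Lemma adj0 m n : adj (0 : 'M[C]_(m, n)) = 0.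
Proof. by apply/matrixP => i j; rewrite !mxE rmorph0. Qed.

Lemma adjZ m n (a : C) (A : 'M[C]_(m, n)) : adj (a *: A) = a^* *: adj A.
Proof. by apply/matrixP => i j; rewrite !mxE rmorphM. Qed.

Lemma adj_diag n (a : 'rV[C]_n) : adj (diag_mx a) = diag_mx (map_mx conjC a).
Proof. by rewrite /adj tr_diag_mx map_diag_mx. Qed.

Lemma adj1 n : adj (1%:M : 'M[C]_n) = 1%:M.
Proof. by rewrite /adj trmx1 map_mx1. Qed.

Lemma adj_trmx m n (A : 'M[C]_(m, n)) : adj A^T = (adj A)^T.
Proof. by rewrite /adj map_trmx. Qed.

Lemma adj_tens m n p q (A : 'M[C]_(m, n)) (B : 'M[C]_(p, q)) :
  adj (A *t B) = adj A *t adj B.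
Proof. by rewrite /adj trmx_tens map_mxT. Qed.

Lemma adj_delta m n (i : 'I_m) (j : 'I_n) :
  adj (delta_mx i j : 'M[C]_(m, n)) = delta_mx j i.
Proof. by rewrite /adj trmx_delta map_delta_mx. Qed.

Lemma mul_adj_row_ge0 n (w : 'rV[C]_n) : 0 <= (w *m adj w) 0 0.
Proof. by rewrite mxE; apply: sumr_ge0 => j _; rewrite !mxE mul_conjC_ge0. Qed.

Lemma mul_adj_row_eq0 n (w : 'rV[C]_n) : (w *m adj w) 0 0 = 0 -> w = 0.
Proof.
rewrite mxE => w0; apply/rowP => j; rewrite mxE.
have w_ge0 i : predT i -> 0 <= w 0 i * adj w i 0 by rewrite !mxE mul_conjC_ge0.
by have /eqP := psumr_eq0P w_ge0 w0 (isT : predT j); rewrite !mxE mul_conjC_eq0 => /eqP.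
Qed.

Lemma sandwich_diag_entry m n (X : 'M[C]_(m, n)) (A : 'M[C]_n) j :
  (X *m A *m adj X) j j = (row j X *m A *m adj (row j X)) 0 0.
Proof.
rewrite !mxE; apply: eq_bigr => k _; rewrite !mxE; congr (_ * _).
by apply: eq_bigr => l _; rewrite !mxE.
Qed.

Lemma adj_mulmx_eq0 m n (Y : 'M[C]_(m, n)) : adj Y *m Y = 0 -> Y = 0.
Proof.
move=> YY0; suff Y0 : adj Y = 0 by rewrite -[Y]adjK Y0 adj0.
apply/row_matrixP => j; rewrite row0.
apply: mul_adj_row_eq0.
have := sandwich_diag_entry (adj Y) 1%:M j; rewrite !mulmx1 adjK YY0 => <-.
by rewrite mxE.
Qed.

Lemma quad_diag_mx n (w a : 'rV[C]_n) :
  (w *m diag_mx a *m adj w) 0 0 = \sum_j a 0 j * (w 0 j * (w 0 j)^*).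
Proof.
by rewrite mul_mx_diag !mxE; apply: eq_bigr => j _; rewrite !mxE mulrAC mulrC.
Qed.

Lemma psdmx_sandwich m n (X : 'M[C]_(m, n)) (A : 'M[C]_n) :
  psdmx A -> psdmx (X *m A *m adj X).
Proof.
case=> hA pA; split; last by move=> v; have := pA (v *m X); rewrite adj_mul !mulmxA.
by rewrite !adj_mul adjK hA mulmxA.
Qed.

Lemma psdmx1 n : psdmx (1%:M : 'M[C]_n).
Proof. by split; [exact: adj1 | move=> v; rewrite mulmx1 mul_adj_row_ge0]. Qed.

Lemma psdmx_mul_adj m n (X : 'M[C]_(m, n)) : psdmx (X *m adj X).
Proof. by have := psdmx_sandwich X (psdmx1 n); rewrite mulmx1. Qed.

Lemma psdmx0 n : psdmx (0 : 'M[C]_n).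
Proof. by split; [exact: adj0 | move=> v; rewrite mulmx0 mul0mx mxE]. Qed.

Lemma psdmxD n (A B : 'M[C]_n) : psdmx A -> psdmx B -> psdmx (A + B).
Proof.
case=> hA pA [hB pB]; split; first by rewrite adjD hA hB.
by move=> v; rewrite mulmxDr mulmxDl mxE addr_ge0.
Qed.

Lemma psdmx_sum n I (r : seq I) (P : pred I) (F : I -> 'M[C]_n) :
  (forall i, P i -> psdmx (F i)) -> psdmx (\sum_(i <- r | P i) F i).
Proof.
move=> psdF; elim/big_rec: _ => [|i A Pi pA]; first exact: psdmx0.
exact: psdmxD (psdF _ Pi) pA.
Qed.

Lemma psdmxZ n (c : C) (A : 'M[C]_n) : 0 <= c -> psdmx A -> psdmx (c *: A).
Proof.
move=> c0 [hA pA]; split; first by rewrite adjZ hA geC0_conj.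
by move=> v; rewrite -scalemxAr -scalemxAl mxE mulr_ge0.
Qed.

Lemma psdmx_diag n (a : 'rV[C]_n) : (forall j, 0 <= a 0 j) -> psdmx (diag_mx a).
Proof.
move=> a0; split.
  by rewrite adj_diag; congr diag_mx; apply/rowP => j; rewrite !mxE geC0_conj.
move=> v; rewrite quad_diag_mx; apply: sumr_ge0 => j _.
by rewrite mulr_ge0 // mul_conjC_ge0.
Qed.

Lemma psdmx_unitary_diag n (V : 'M[C]_n) (a : 'rV[C]_n) :
  (forall j, 0 <= a 0 j) -> psdmx (adj V *m diag_mx a *m V).
Proof.
by move=> a0; have := psdmx_sandwich (adj V) (psdmx_diag a0); rewrite adjK.
Qed.

Lemma psdmx_delta k (x : 'I_k) : psdmx (delta_mx x x : 'M[C]_k).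
Proof.
have := psdmx_mul_adj (delta_mx x (0 : 'I_1) : 'M[C]_(k, 1)).
by rewrite adj_delta mul_delta_mx.
Qed.

Lemma psdmx_trmx n (A : 'M[C]_n) : psdmx A -> psdmx A^T.
Proof.
move=> [hA pA]; split; first by rewrite adj_trmx hA.
move=> v; suff -> : (v *m A^T *m adj v) 0 0 = ((adj v)^T *m A *m adj (adj v)^T) 0 0.
  exact: pA.
transitivity ((v *m A^T *m adj v)^T 0 0); first by rewrite [RHS]mxE.
by rewrite !trmx_mul trmxK adj_trmx adjK mulmxA.
Qed.

Lemma unitarymx_adj n (V : 'M[C]_n) :
  V \is unitarymx -> V *m adj V = 1%:M /\ adj V *m V = 1%:M.
Proof. by move=> /unitarymxP VV; split => //; exact: mulmx1C. Qed.

Lemma mul_adj_conj n (V A B : 'M[C]_n) : V *m adj V = 1%:M ->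
  (adj V *m A *m V) *m (adj V *m B *m V) = adj V *m (A *m B) *m V.
Proof.
by move=> VV; rewrite !mulmxA -[adj V *m A *m V *m adj V]mulmxA VV mulmx1.
Qed.

Lemma mxtrace_adj_conj n (V A : 'M[C]_n) :
  V *m adj V = 1%:M -> \tr (adj V *m A *m V) = \tr A.
Proof. by move=> VV; rewrite mxtrace_mulC mulmxA VV mul1mx. Qed.

Lemma herm_spectral n (A : 'M[C]_n) : adj A = A ->
  exists V : 'M[C]_n, exists a : 'rV[C]_n,
    [/\ V \is unitarymx, A = adj V *m diag_mx a *m V &
      forall j, a 0 j = (row j V *m A *m adj (row j V)) 0 0].
Proof.
move=> hA; have /orthomx_spectralP eA : A \is normalmx.
  by apply/normalmxP; change (A *m adj A = adj A *m A); rewrite hA.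
have uV := spectral_unitarymx A; have [VV _] := unitarymx_adj uV.
rewrite invmx_unitary // in eA.
exists (spectralmx A), (spectral_diag A); split => // j.
rewrite -sandwich_diag_entry; set V := spectralmx A; set a := spectral_diag A.
by rewrite [in RHS]eA !mulmxA VV mul1mx -mulmxA VV mulmx1 mxE eqxx mulr1n.
Qed.

Lemma psdmx_spectral n (A : 'M[C]_n) : psdmx A ->
  exists V : 'M[C]_n, exists a : 'rV[C]_n,
    [/\ V \is unitarymx, A = adj V *m diag_mx a *m V & forall j, 0 <= a 0 j].
Proof.
move=> pA; have [V [a [uV eA aE]]] := herm_spectral pA.1.
by exists V, a; split => // j; rewrite aE; exact: pA.2.
Qed.

Lemma psdmx_sqrt_exists n (A : 'M[C]_n) :
  psdmx A -> exists B, psdmx B /\ B *m B = A.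
Proof.
move=> pA; have [V [a [uV eA a0]]] := psdmx_spectral pA.
have [VV _] := unitarymx_adj uV.
exists (adj V *m diag_mx (map_mx sqrtC a) *m V); split.
  by apply: psdmx_unitary_diag => j; rewrite mxE sqrtC_ge0.
rewrite (mul_adj_conj _ _ VV) mulmx_diag eA; congr (_ *m diag_mx _ *m _).
by apply/rowP => j; rewrite !mxE -expr2 sqrtCK.
Qed.

Lemma psdmx_quad_eq0 n (A : 'M[C]_n) (v : 'rV[C]_n) :
  psdmx A -> (v *m A *m adj v) 0 0 = 0 -> v *m A = 0.
Proof.
move=> pA vAv0; have [S [pS SS]] := psdmx_sqrt_exists pA.
have vS0 : v *m S = 0.
  by apply: mul_adj_row_eq0; rewrite adj_mul pS.1 !mulmxA -(mulmxA v) SS.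
by rewrite -SS mulmxA vS0 mul0mx.
Qed.

Lemma herm_quad_real n (A : 'M[C]_n) (v : 'rV[C]_n) : adj A = A ->
  ((v *m A *m adj v) 0 0)^* = (v *m A *m adj v) 0 0.
Proof.
move=> hA.
have -> : ((v *m A *m adj v) 0 0)^* = adj (v *m A *m adj v) 0 0 by rewrite !mxE.
by rewrite !adj_mul adjK hA mulmxA.
Qed.

(* At an eigenvector [v] of [B - B'], the quadratic form of
   [(B - B') B + B' (B - B') = B^2 - B'^2 = 0] is [mu (<v,Bv> + <v,B'v>)]. *)
Lemma sqrt_diff_eigenvalue_eq0 n (B B' : 'M[C]_n) (v : 'rV[C]_n) (mu : C) :
  psdmx B -> psdmx B' -> B *m B = B' *m B' ->
  v *m (B - B') = mu *: v -> mu^* = mu -> v != 0 -> mu = 0.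
Proof.
move=> pB pB' BB vD mu_real v0; set D := B - B' in vD *.
have Dv : D *m adj v = mu *: adj v.
  by rewrite -[D]adjK adjB pB.1 pB'.1 -adj_mul vD adjZ mu_real.
have key : D *m B + B' *m D = 0.
  by rewrite /D mulmxBl mulmxBr BB addrA subrK subrr.
have : mu * ((v *m B *m adj v) 0 0 + (v *m B' *m adj v) 0 0) = 0.
  have := congr1 (fun M => (v *m M *m adj v) 0 0) key.
  rewrite /= mulmxDr mulmxDl mulmx0 mul0mx [X in _ = X -> _]mxE mxE => <-.
  rewrite mulrDr; congr (_ + _).
    by rewrite !mulmxA vD -!scalemxAl [RHS]mxE.
  by rewrite -!mulmxA Dv -!scalemxAr [RHS]mxE !mulmxA.
move/eqP; rewrite mulf_eq0 => /orP[/eqP //|].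
rewrite paddr_eq0 ?pB.2 ?pB'.2 // => /andP[/eqP vBv0 /eqP vB'v0].
have vB := psdmx_quad_eq0 pB vBv0; have vB' := psdmx_quad_eq0 pB' vB'v0.
have /eqP : mu *: v = 0 by rewrite -vD /D mulmxBr vB vB' subrr.
by rewrite scalemx_eq0 (negPf v0) orbF => /eqP.
Qed.

Lemma psdmx_sqrt_uniq n (B B' : 'M[C]_n) :
  psdmx B -> psdmx B' -> B *m B = B' *m B' -> B = B'.
Proof.
move=> pB pB' BB; have hD : adj (B - B') = B - B' by rewrite adjB pB.1 pB'.1.
have [V [mu [uV eD muE]]] := herm_spectral hD; have [VV _] := unitarymx_adj uV.
suff mu0 : mu = 0.
  by apply/eqP; rewrite -subr_eq0 eD mu0 linear0 mulmx0 mul0mx.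
apply/rowP => j; rewrite mxE; apply: (sqrt_diff_eigenvalue_eq0 (v := row j V) pB pB' BB).
- by rewrite -row_mul {1}eD !mulmxA VV mul1mx row_mul row_diag_mx -scalemxAl -rowE.
- by rewrite muE herm_quad_real.
- apply/eqP => vj0; have := sandwich_diag_entry V 1%:M j.
  by rewrite mulmx1 VV vj0 !mul0mx !mxE eqxx => /eqP; rewrite oner_eq0.
Qed.

Lemma sqrtmP n (A : 'M[C]_n) : psdmx A -> psdmx (sqrtm A) /\ sqrtm A *m sqrtm A = A.
Proof. by move=> pA; exact: (xgetPex 0 (psdmx_sqrt_exists pA)). Qed.

Lemma sqrtm_unique n (A B : 'M[C]_n) : psdmx B -> B *m B = A -> sqrtm A = B.
Proof.
move=> pB BB; have pA : psdmx A by rewrite -BB -{2}pB.1; exact: psdmx_mul_adj.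
by have [pS SS] := sqrtmP pA; apply: psdmx_sqrt_uniq; rewrite // SS.
Qed.

Lemma psdmx_tens m n (A : 'M[C]_m) (B : 'M[C]_n) :
  psdmx A -> psdmx B -> psdmx (A *t B).
Proof.
move=> pA pB; have [S [pS SS]] := psdmx_sqrt_exists pA.
have [T [pT TT]] := psdmx_sqrt_exists pB.
by rewrite -SS -TT -{2}pS.1 -{2}pT.1 -tensmx_mul -adj_tens; exact: psdmx_mul_adj.
Qed.

Lemma psdmx_diag_ge0 n (A : 'M[C]_n) j : psdmx A -> 0 <= A j j.
Proof.
move=> pA; have := sandwich_diag_entry 1%:M A j.
by rewrite mul1mx adj1 mulmx1 => ->; exact: pA.2.
Qed.

Lemma psdmx_tr_ge0 n (A : 'M[C]_n) : psdmx A -> 0 <= \tr A.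
Proof. by move=> pA; apply: sumr_ge0 => j _; exact: psdmx_diag_ge0. Qed.

Lemma psdmx_tr_eq0 n (A : 'M[C]_n) : psdmx A -> \tr A = 0 -> A = 0.
Proof.
move=> pA; have [V [a [uV eA a0]]] := psdmx_spectral pA.
have [VV _] := unitarymx_adj uV.
rewrite {1}eA (mxtrace_adj_conj _ VV) mxtrace_diag => a_sum0.
suff a_eq0 : a = 0 by rewrite eA a_eq0 linear0 mulmx0 mul0mx.
apply/rowP => j; rewrite mxE.
by apply: (psumr_eq0P _ a_sum0) => // i _; exact: a0.
Qed.

Lemma loewner_le_tr n (A : 'M[C]_n) : psdmx A -> loewner_le A (\tr A *: 1%:M).
Proof.
move=> pA; have [V [a [uV eA a0]]] := psdmx_spectral pA.
have [VV V'V] := unitarymx_adj uV.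
split; first by rewrite adjB adjZ adj1 geC0_conj ?psdmx_tr_ge0 // pA.1.
have entryB (M N : 'M[C]_1) : (M - N) 0 0 = M 0 0 - N 0 0 by rewrite !mxE.
move=> v; rewrite mulmxBr mulmxBl entryB subr_ge0 -scalemxAr -scalemxAl mulmx1.
rewrite [X in _ <= X]mxE.
set w := v *m adj V.
have -> : v *m A *m adj v = w *m diag_mx a *m adj w by rewrite adj_mul adjK eA !mulmxA.
have -> : v *m adj v = w *m adj w by rewrite adj_mul adjK -mulmxA (mulmxA (adj V)) V'V mul1mx.
rewrite {1}eA (mxtrace_adj_conj _ VV) mxtrace_diag quad_diag_mx mulr_suml.
apply: ler_sum => j _; apply: ler_wpM2l; first exact: a0.
rewrite [X in _ <= X]mxE (bigD1 j) //= {2}/adj !mxE lerDl.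
by apply: sumr_ge0 => i _; rewrite !mxE mul_conjC_ge0.
Qed.

(** * Tensor products, partial traces and the Loewner order *)

Lemma tensmxDl m n p q (A B : 'M[C]_(m, n)) (N : 'M[C]_(p, q)) :
  (A + B) *t N = A *t N + B *t N.
Proof. by apply/matrixP => i j; rewrite !mxE mulrDl. Qed.

Lemma tensmxDr m n p q (N : 'M[C]_(m, n)) (A B : 'M[C]_(p, q)) :
  N *t (A + B) = N *t A + N *t B.
Proof. by apply/matrixP => i j; rewrite !mxE mulrDr. Qed.

Lemma tensmxNr m n p q (N : 'M[C]_(m, n)) (A : 'M[C]_(p, q)) :
  N *t (- A) = - (N *t A).
Proof. by apply/matrixP => i j; rewrite !mxE mulrN. Qed.

Lemma tensmxBr m n p q (N : 'M[C]_(m, n)) (A B : 'M[C]_(p, q)) :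
  N *t (A - B) = N *t A - N *t B.
Proof. by rewrite tensmxDr tensmxNr. Qed.

Lemma tensmxZl m n p q (a : C) (A : 'M[C]_(m, n)) (N : 'M[C]_(p, q)) :
  (a *: A) *t N = a *: (A *t N).
Proof. by apply/matrixP => i j; rewrite !mxE mulrA. Qed.

Lemma tensmxZr m n p q (a : C) (A : 'M[C]_(m, n)) (N : 'M[C]_(p, q)) :
  A *t (a *: N) = a *: (A *t N).
Proof. by apply/matrixP => i j; rewrite !mxE mulrCA. Qed.

Lemma tensmx_suml m n p q I (r : seq I) (P : pred I) (F : I -> 'M[C]_(m, n))
    (N : 'M[C]_(p, q)) :
  (\sum_(i <- r | P i) F i) *t N = \sum_(i <- r | P i) F i *t N.
Proof. by elim/big_rec2: _ => [|i A B _ <-]; rewrite ?tens0mx ?tensmxDl. Qed.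

Lemma mxtrace_tens m n (A : 'M[C]_m) (B : 'M[C]_n) : \tr (A *t B) = \tr A * \tr B.
Proof. by rewrite /mxtrace mulr_sum; apply: eq_bigr => k _; rewrite mxE. Qed.

Lemma mxtrace_delta k (x : 'I_k) : \tr (delta_mx x x : 'M[C]_k) = 1.
Proof.
rewrite /mxtrace (bigD1 x) //= mxE !eqxx big1 ?addr0 // => j /negPf jx.
by rewrite mxE jx.
Qed.

Lemma ptrB_tens m n (A : 'M[C]_m) (B : 'M[C]_n) : ptrB (A *t B) = \tr B *: A.
Proof.
apply/matrixP => i l; rewrite !mxE mulrC mulr_sumr.
by apply: eq_bigr => j _; rewrite tensmxE.
Qed.

Lemma ptrA_tens m n (A : 'M[C]_m) (B : 'M[C]_n) : ptrA (A *t B) = \tr A *: B.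
Proof.
apply/matrixP => j l; rewrite !mxE mulr_suml.
by apply: eq_bigr => i _; rewrite tensmxE.
Qed.

Lemma ptrBD m n (A B : 'M[C]_(m * n)) : ptrB (A + B) = ptrB A + ptrB B.
Proof.
by apply/matrixP => i l; rewrite !mxE -big_split; apply: eq_bigr => j _; rewrite mxE.
Qed.

Lemma ptrB0 m n : ptrB (0 : 'M[C]_(m * n)) = 0.
Proof. by apply/matrixP => i l; rewrite !mxE big1 // => j _; rewrite mxE. Qed.

Lemma ptrAD m n (A B : 'M[C]_(m * n)) : ptrA (A + B) = ptrA A + ptrA B.
Proof.
by apply/matrixP => j l; rewrite !mxE -big_split; apply: eq_bigr => i _; rewrite mxE.
Qed.

Lemma ptrA0 m n : ptrA (0 : 'M[C]_(m * n)) = 0.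
Proof. by apply/matrixP => j l; rewrite !mxE big1 // => i _; rewrite mxE. Qed.

Lemma ptrB_sum m n I (r : seq I) (P : pred I) (F : I -> 'M[C]_(m * n)) :
  ptrB (\sum_(i <- r | P i) F i) = \sum_(i <- r | P i) ptrB (F i).
Proof. exact: (big_morph _ (@ptrBD m n) (@ptrB0 m n)). Qed.

Lemma ptrA_sum m n I (r : seq I) (P : pred I) (F : I -> 'M[C]_(m * n)) :
  ptrA (\sum_(i <- r | P i) F i) = \sum_(i <- r | P i) ptrA (F i).
Proof. exact: (big_morph _ (@ptrAD m n) (@ptrA0 m n)). Qed.

Lemma loewner_le_trans n (A B D : 'M[C]_n) :
  loewner_le A B -> loewner_le B D -> loewner_le A D.
Proof. by move=> AB BD; have := psdmxD BD AB; rewrite addrA subrK. Qed.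

Lemma loewner_leZ n (c : C) (A B : 'M[C]_n) :
  0 <= c -> loewner_le A B -> loewner_le (c *: A) (c *: B).
Proof. by rewrite /loewner_le -scalerBr; exact: psdmxZ. Qed.

Lemma loewner_le_sandwich m n (X : 'M[C]_(m, n)) (A B : 'M[C]_n) :
  loewner_le A B -> loewner_le (X *m A *m adj X) (X *m B *m adj X).
Proof. by rewrite /loewner_le -mulmxBl -mulmxBr; exact: psdmx_sandwich. Qed.

Lemma mxtrace_psdmx n (A : 'M[C]_n) : psdmx A -> \tr A = (trR A)%:C.
Proof.
move/psdmx_tr_ge0; rewrite /trR; case: (\tr A) => a b.
by rewrite lecE /= => /andP[/eqP -> _].
Qed.

Lemma loewner_le_tr_proj n (A P : 'M[C]_n) :
  psdmx A -> adj P = P -> P *m P = P -> P *m A *m P = A ->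
  loewner_le A (\tr A *: P).
Proof.
move=> pA hP PP PAP; have := loewner_le_sandwich P (loewner_le_tr pA).
by rewrite hP PAP -scalemxAr -scalemxAl mulmx1 PP.
Qed.

Lemma Dmax_le_of_loewner n (A B : 'M[C]_n) (a l : R) :
  psdmx B -> loewner_le A (a%:C *: B) -> a <= 2 `^ l -> (Dmax A B <= l%:E)%E.
Proof.
move=> pB AB al; apply: ereal_inf_lbound; exists l; last by [].
apply: (loewner_le_trans AB); rewrite /loewner_le -scalerBl -raddfB.
by apply: psdmxZ pB; rewrite lecR subr_ge0.
Qed.

(** * Classical-quantum matrices *)

Section CqState.

Definition cqmx k n (B : 'I_k -> 'M[C]_n) : 'M[C]_(k * n) :=
  \sum_(x < k) delta_mx x x *t B x.

Variables (k n : nat).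
Implicit Types (B : 'I_k -> 'M[C]_n).

Lemma cqmx_psd B : (forall x, psdmx (B x)) -> psdmx (cqmx B).
Proof.
by move=> pB; apply: psdmx_sum => x _; exact: psdmx_tens (psdmx_delta x) (pB x).
Qed.

Lemma mxtrace_cqmx B : \tr (cqmx B) = \tr (\sum_x B x).
Proof.
rewrite /cqmx !raddf_sum /=; apply: eq_bigr => x _.
by rewrite mxtrace_tens mxtrace_delta mul1r.
Qed.

Lemma ptrB_cqmx B : ptrB (cqmx B) = \sum_x \tr (B x) *: delta_mx x x.
Proof. by rewrite ptrB_sum; apply: eq_bigr => x _; rewrite ptrB_tens. Qed.

Lemma ptrA_cqmx B : ptrA (cqmx B) = \sum_x B x.
Proof.
by rewrite ptrA_sum; apply: eq_bigr => x _; rewrite ptrA_tens mxtrace_delta scale1r.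
Qed.

Lemma ptrB_cqmx_psd B : (forall x, psdmx (B x)) -> psdmx (ptrB (cqmx B)).
Proof.
move=> pB; rewrite ptrB_cqmx; apply: psdmx_sum => x _.
exact: psdmxZ (psdmx_tr_ge0 (pB x)) (psdmx_delta x).
Qed.

Lemma cqmx_state B (rho : 'M[C]_n) :
  (forall x, psdmx (B x)) -> \sum_x B x = rho -> state rho -> state (cqmx B).
Proof.
by move=> pB sumB [_ tr1]; split; [exact: cqmx_psd | rewrite mxtrace_cqmx sumB].
Qed.

Lemma cqmx_sandwich m (X : 'M[C]_(m, n)) B :
  ((1%:M : 'M_k) *t X) *m cqmx B *m adj (1%:M *t X) =
  cqmx (fun x => X *m B x *m adj X).
Proof.
rewrite adj_tens adj1 mulmx_sumr mulmx_suml; apply: eq_bigr => x _.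
by rewrite !tensmx_mul mul1mx mulmx1.
Qed.

Lemma cqmx_le B B' :
  (forall x, loewner_le (B x) (B' x)) -> loewner_le (cqmx B) (cqmx B').
Proof.
move=> leB; rewrite /loewner_le /cqmx -sumrB; apply: psdmx_sum => x _.
by rewrite -tensmxBr; exact: psdmx_tens (psdmx_delta x) (leB x).
Qed.

Lemma cqmx_scaled (c : 'I_k -> C) (M : 'M[C]_n) :
  cqmx (fun x => c x *: M) = (\sum_x c x *: delta_mx x x) *t M.
Proof. by rewrite tensmx_suml; apply: eq_bigr => x _; rewrite tensmxZl tensmxZr. Qed.

End CqState.

Section CqMarginalBound.

Variables (k n : nat) (B : 'I_k -> 'M[C]_n) (P : 'M[C]_n) (theta : R).
Hypotheses (psdB : forall x, psdmx (B x)) (hermP : adj P = P) (idemP : P *m P = P).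
Hypotheses (PBP : forall x, P *m B x *m P = B x) (theta_gt0 : 0 < theta).
Hypothesis thetaP_le : loewner_le (theta%:C *: P) (\sum_x B x).

Lemma cqmx_le_marginals :
  loewner_le (cqmx B) ((theta^-1)%:C *: (ptrB (cqmx B) *t \sum_x B x)).
Proof.
have inv_theta : (theta^-1)%:C * theta%:C = 1 :> C.
  by rewrite -rmorphM mulVf ?gt_eqF // rmorph1.
have P_le : loewner_le P ((theta^-1)%:C *: \sum_x B x).
  have := loewner_leZ (c := (theta^-1)%:C) _ thetaP_le.
  by rewrite scalerA inv_theta scale1r; apply; rewrite lecR invr_ge0 ltW.
have le_block x :
    loewner_le (B x) (((theta^-1)%:C * \tr (B x)) *: \sum_y B y).
  apply: loewner_le_trans (loewner_le_tr_proj (psdB x) hermP idemP (PBP x)) _.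
  rewrite mulrC -scalerA; exact: loewner_leZ (psdmx_tr_ge0 (psdB x)) P_le.
rewrite ptrB_cqmx -tensmxZl scaler_sumr.
under eq_bigr do rewrite scalerA.
by rewrite -cqmx_scaled; exact: cqmx_le.
Qed.

Lemma Imax_cqmx_le l : theta^-1 <= 2 `^ l -> (Imax (cqmx B) <= l%:E)%E.
Proof.
move=> le_l; rewrite /Imax ptrA_cqmx.
apply: Dmax_le_of_loewner cqmx_le_marginals le_l.
apply: psdmx_tens (ptrB_cqmx_psd psdB) _.
by apply: psdmx_sum => x _; exact: psdB.
Qed.

Lemma Imax1_cqmx_le l : 0 < trR (\sum_x B x) ->
  trR (\sum_x B x) / theta <= 2 `^ l -> (Imax1 (cqmx B) <= l%:E)%E.
Proof.
set M := \sum_x B x; set t := trR M => t_gt0 le_l.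
have pM : psdmx M by apply: psdmx_sum => x _; exact: psdB.
have pt : 0 <= (t^-1)%:C by rewrite lecR invr_ge0 ltW.
apply: (@le_trans _ _ (Dmax (cqmx B) (ptrB (cqmx B) *t ((t^-1)%:C *: M)))).
  apply: ereal_inf_lbound; exists ((t^-1)%:C *: M); last by [].
  split; first exact: psdmxZ.
  by rewrite mxtraceZ (mxtrace_psdmx pM) -rmorphM mulVf ?gt_eqF.
apply: Dmax_le_of_loewner le_l.
  exact: psdmx_tens (ptrB_cqmx_psd psdB) (psdmxZ pt pM).
rewrite tensmxZr scalerA -rmorphM mulrAC mulfV ?gt_eqF // mul1r.
exact: cqmx_le_marginals.
Qed.

End CqMarginalBound.

(** * Compression by an orthogonal projector *)

Section Compression.

Variables (n : nat) (P : 'M[C]_n).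
Hypotheses (hermP : adj P = P) (idemP : P *m P = P).

Lemma psdmx_compress A : psdmx A -> psdmx (P *m A *m P).
Proof. by rewrite -{2}hermP; exact: psdmx_sandwich. Qed.

Lemma compressK A : P *m (P *m A *m P) *m P = P *m A *m P.
Proof. by rewrite !mulmxA idemP -mulmxA idemP. Qed.

Lemma mxtrace_compress_split A :
  \tr (P *m A *m P) + \tr ((1%:M - P) *m A *m (1%:M - P)) = \tr A.
Proof.
have trE Q : Q *m Q = Q -> \tr (Q *m A *m Q) = \tr (A *m Q).
  by move=> QQ; rewrite -mulmxA mxtrace_mulC -mulmxA QQ.
have idemQ : (1%:M - P) *m (1%:M - P) = 1%:M - P.
  by rewrite mulmxBr mulmx1 mulmxBl mul1mx idemP subrr subr0.
by rewrite !trE // -raddfD /= -mulmxDr addrC subrK mulmx1.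
Qed.

Lemma trR_compress_le A : psdmx A -> trR (P *m A *m P) <= trR A.
Proof.
move=> pA; have pQ : psdmx ((1%:M - P) *m A *m (1%:M - P)).
  by rewrite -{2}[1%:M - P]adjK adjB adj1 hermP; exact: psdmx_sandwich.
rewrite -lecR -(mxtrace_psdmx pA) -(mxtrace_psdmx (psdmx_compress pA)).
by rewrite -[leRHS](mxtrace_compress_split A) lerDl psdmx_tr_ge0.
Qed.

(* The square root of [P sigma P] satisfies [T = T P = P T], which turns the
   fidelity operator [sqrt sigma T] into one with modulus [T^2]. *)
Lemma trnorm_sqrtm_compress sigma : psdmx sigma ->
  trnorm (sqrtm sigma *m sqrtm (P *m sigma *m P)) = trR (P *m sigma *m P).
Proof.
move=> psigma; have [pS SS] := sqrtmP psigma.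
have [pT TT] := sqrtmP (psdmx_compress psigma).
set S := sqrtm sigma in pS SS *; set T := sqrtm _ in pT TT *.
have TQ0 : T *m (1%:M - P) = 0.
  apply: adj_mulmx_eq0; rewrite adj_mul adjB adj1 hermP pT.1 mulmxA.
  rewrite -(mulmxA (1%:M - P) T T) TT.
  by rewrite !mulmxA mulmxBl mul1mx idemP subrr !mul0mx.
have TP : T *m P = T.
  by apply/esym/eqP; rewrite -subr_eq0 -{1}[T]mulmx1 -mulmxBr TQ0.
have PT : P *m T = T by rewrite -[LHS]adjK adj_mul hermP pT.1 TP pT.1.
have key : adj (S *m T) *m (S *m T) = T *m T *m (T *m T).
  rewrite adj_mul pS.1 pT.1 mulmxA -(mulmxA T S S) SS.
  by rewrite mulmxA -(mulmxA T T T) TT !mulmxA TP -(mulmxA (T *m sigma) P T) PT.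
have pTT : psdmx (T *m T) by rewrite -{2}pT.1; exact: psdmx_mul_adj.
by rewrite /trnorm key (sqrtm_unique pTT) // TT.
Qed.

Lemma sball_compress (sigma : 'M[C]_n) (r : R) :
  state sigma -> 0 <= r -> 2 * (1 - trR (P *m sigma *m P)) <= r ^+ 2 ->
  sball r sigma (P *m sigma *m P).
Proof.
move=> [psigma tr1] r0 le_r; have psigma' := psdmx_compress psigma.
have trR1 : trR sigma = 1 by rewrite /trR tr1.
set t := trR _ in le_r *.
have t_ge0 : 0 <= t by rewrite -lecR -(mxtrace_psdmx psigma') psdmx_tr_ge0.
have t_le1 : t <= 1 by rewrite -trR1; exact: trR_compress_le.
split=> //; rewrite /purified_dist /gfid trnorm_sqrtm_compress // -/t trR1.
rewrite subrr mul0r sqrtr0 addr0 -(ger0_norm r0) -sqrtr_sqr.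
by apply: ler_wsqrtr; apply: le_trans le_r; nra.
Qed.

End Compression.

(** * Spectral thresholds and truncated states *)

Lemma loewner_le_unitary_diag n (V : 'M[C]_n) (f g : 'rV[C]_n) :
  (forall j, f 0 j <= g 0 j) ->
  loewner_le (adj V *m diag_mx f *m V) (adj V *m diag_mx g *m V).
Proof.
move=> fg; rewrite /loewner_le -mulmxBl -mulmxBr -linearB.
by apply: psdmx_unitary_diag => j; rewrite !mxE subr_ge0 fg.
Qed.

Lemma scale_unitary_diag n (c : C) (V : 'M[C]_n) (f : 'rV[C]_n) :
  c *: (adj V *m diag_mx f *m V) = adj V *m diag_mx (c *: f) *m V.
Proof. by rewrite scalemxAl scalemxAr -linearZ. Qed.

Section SpectralThreshold.

Variables (n : nat) (rho V : 'M[C]_n) (a : 'rV[R]_n) (theta : R).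
Hypothesis rho_eig : eigdec rho V a.

Let VV : V *m adj V = 1%:M := (unitarymx_adj rho_eig.1).1.

Lemma eigdec_ge0 : psdmx rho -> forall j, 0 <= a 0 j.
Proof.
move=> prho j; rewrite -lecR.
have : (V *m rho *m adj V) j j = (a 0 j)%:C.
  by rewrite rho_eig.2 !mulmxA VV mul1mx -mulmxA VV mulmx1 !mxE eqxx mulr1n.
by rewrite sandwich_diag_entry => <-; exact: prho.2.
Qed.

Lemma eigdec_sum : \tr rho = 1 -> \sum_j a 0 j = 1.
Proof.
rewrite {1}rho_eig.2 (mxtrace_adj_conj _ VV) mxtrace_diag => tr1; apply: complexI.
by rewrite rmorph_sum rmorph1 -tr1; apply: eq_bigr => j _; rewrite mxE.
Qed.

Definition threshold_proj : 'M[C]_n :=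
  adj V *m diag_mx (\row_j (if theta <= a 0 j then 1 else 0 : C)) *m V.
Local Notation Pi := threshold_proj.

Lemma threshold_proj_herm : adj Pi = Pi.
Proof.
rewrite /Pi !adj_mul adjK adj_diag mulmxA; congr (_ *m diag_mx _ *m _).
by apply/rowP => j; rewrite !mxE; case: ifP; rewrite ?rmorph1 ?rmorph0.
Qed.

Lemma threshold_proj_idem : Pi *m Pi = Pi.
Proof.
rewrite /Pi (mul_adj_conj _ _ VV) mulmx_diag; congr (_ *m diag_mx _ *m _).
by apply/rowP => j; rewrite !mxE; case: (theta <= a 0 j); rewrite ?mulr1 ?mulr0.
Qed.

Lemma compress_threshold_proj :
  Pi *m rho *m Pi =
  adj V *m diag_mx (\row_j ((if theta <= a 0 j then a 0 j else 0)%:C)) *m V.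
Proof.
rewrite /Pi rho_eig.2 !(mul_adj_conj _ _ VV) !mulmx_diag.
congr (_ *m diag_mx _ *m _).
apply/rowP => j; rewrite !mxE.
by case: (theta <= a 0 j); rewrite ?mulr1 ?mul1r ?mulr0 ?mul0r.
Qed.

Lemma trR_compress_threshold :
  trR (Pi *m rho *m Pi) = \sum_j (if theta <= a 0 j then a 0 j else 0).
Proof.
rewrite compress_threshold_proj /trR (mxtrace_adj_conj _ VV) mxtrace_diag.
by under eq_bigr do rewrite mxE; rewrite -rmorph_sum.
Qed.

Lemma threshold_proj_le : loewner_le (theta%:C *: Pi) (Pi *m rho *m Pi).
Proof.
rewrite compress_threshold_proj scale_unitary_diag.
apply: loewner_le_unitary_diag => j; rewrite !mxE.
by case: ifP => le_theta; rewrite ?mulr1 ?mulr0 ?rmorph0 ?lecR.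
Qed.

End SpectralThreshold.

Lemma support_card_le_rank n (v : 'rV[C]_n) :
  (#|[set j | (v 0 j != 0)%R]| <= \rank (diag_mx v))%N.
Proof.
set K := [set j | v 0 j != 0].
pose X : 'M[C]_(#|K|, n) := \matrix_(i, j) (j == enum_val i)%:R.
pose Y : 'M[C]_(n, #|K|) := \matrix_(j, i) ((j == enum_val i)%:R * (v 0 j)^-1).
have XvY : X *m diag_mx v *m Y = 1%:M.
  apply/matrixP => i i'; rewrite mul_mx_diag !mxE (bigD1 (enum_val i)) //= !mxE eqxx.
  rewrite big1 ?addr0 => [|j /negPf ji]; last by rewrite !mxE ji !mul0r.
  have : v 0 (enum_val i) != 0 by have := enum_valP i; rewrite inE.
  rewrite mul1r (inj_eq enum_val_inj).
by case: (i == i') => vi0; rewrite ?mul1r ?mul0r ?mulr0 ?mulfV.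
rewrite -[X in (X <= _)%N](mxrank1 C) -XvY.
exact: leq_trans (mxrankM_maxl _ _) (mxrankM_maxr _ _).
Qed.

Lemma mxrank_adj_conj n (V A : 'M[C]_n) :
  V *m adj V = 1%:M -> (\rank A <= \rank (adj V *m A *m V))%N.
Proof.
move=> VV; have AE : A = V *m (adj V *m A *m V) *m adj V.
  by rewrite !mulmxA VV mul1mx -mulmxA VV mulmx1.
rewrite {1}AE.
exact: leq_trans (mxrankM_maxl _ _) (mxrankM_maxr _ _).
Qed.

Section Truncation.

Variables (n : nat) (rho U : 'M[C]_n) (lam : 'rV[R]_n).
Hypotheses (rho_state : state rho) (rho_eig : eigdec rho U lam).

Local Notation V := (chosen_eig rho).1.
Local Notation a := (chosen_eig rho).2.

Lemma chosen_eigP : eigdec rho V a.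
Proof. by apply: (@xgetPex _ (0, 0) [set p | eigdec rho p.1 p.2]); exists (U, lam). Qed.

Lemma chosen_eig_ge0 j : 0 <= a 0 j.
Proof. exact: eigdec_ge0 chosen_eigP rho_state.1 j. Qed.

Lemma chosen_eig_sum : \sum_j a 0 j = 1.
Proof. exact: eigdec_sum chosen_eigP rho_state.2. Qed.

Lemma trunc_stateE delta : 0 <= delta -> exists z : seq 'I_n,
  [/\ uniq z, \sum_(i <- z) a 0 i <= delta &
      trunc_state delta rho = adj V *m diag_mx (map_mx (fun x => x%:C)
          (\row_i (if i \in z then 0 else a 0 i))) *m V].
Proof.
move=> delta_ge0; rewrite /trunc_state /=.
set s := sort _ _; set m := \big[maxn/0%N]_(j < n.+1 | _) _.
exists (take m s); split => //; first by rewrite take_uniq // sort_uniq enum_uniq.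
rewrite /m (bigop.bigmax_eq_arg ord0); last by rewrite take0 big_nil.
by case: arg_maxnP => //=; rewrite take0 big_nil.
Qed.

Definition trunc_rank delta := \rank (trunc_state delta rho).

(* [z] lists the indices of the eigenvalues removed by the truncation. *)
Lemma trunc_support delta : 0 <= delta -> exists z : seq 'I_n,
  [/\ uniq z, \sum_(i <- z) a 0 i <= delta &
      (#|[set j | (j \notin z) && (a 0 j != 0)%R]| <= trunc_rank delta)%N].
Proof.
move=> delta_ge0; have [z [uz z_le rhoE]] := trunc_stateE delta_ge0.
exists z; split => //.
have [VV _] := unitarymx_adj chosen_eigP.1.
rewrite /trunc_rank rhoE; apply: leq_trans (mxrank_adj_conj _ VV).
apply: leq_trans (support_card_le_rank _); rewrite leq_eqVlt; apply/orP; left.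
apply/eqP/eq_card => j; rewrite !inE !mxE fmorph_eq0.
by case: (j \in z); rewrite ?eqxx.
Qed.

Lemma sum_eig_mem (z : seq 'I_n) : uniq z ->
  \sum_j (if j \in z then a 0 j else 0) = \sum_(i <- z) a 0 i.
Proof. by move=> uz; rewrite [RHS]big_uniq // [RHS]big_mkcond. Qed.

Lemma trunc_rank_gt0 delta : 0 <= delta < 1 -> (0 < trunc_rank delta)%N.
Proof.
move=> /andP[delta_ge0 delta_lt1].
have [z [uz z_le card_le]] := trunc_support delta_ge0.
rewrite lt0n; apply: contraTneq delta_lt1 => d0; rewrite -leNgt.
apply: le_trans z_le; rewrite -sum_eig_mem // -chosen_eig_sum le_eqVlt; apply/orP; left.
apply/eqP/eq_bigr => j _; case: ifP => // jz; apply/eqP; apply: contraT => aj0.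
rewrite d0 in card_le.
suff : (0 < #|[set j | (j \notin z) && (a 0 j != 0)%R]|)%N by rewrite ltnNge card_le.
by apply/card_gt0P; exists j; rewrite inE jz aj0.
Qed.

(* Eigenvalues below [delta / d] are either truncated (weight at most [delta])
   or among the at most [d] surviving ones (weight below [d * (delta / d)]). *)
Lemma small_eig_weight delta : 0 < delta < 1 ->
  \sum_j (if a 0 j < delta / (trunc_rank delta)%:R then a 0 j else 0) <= 2 * delta.
Proof.
move=> /andP[delta_gt0 delta_lt1]; have delta_ge0 := ltW delta_gt0.
have d_gt0 : (0 < trunc_rank delta)%N by apply: trunc_rank_gt0; rewrite delta_ge0.
have [z [uz z_le card_le]] := trunc_support delta_ge0.
set theta := delta / _; set S := [set j | _ && _] in card_le.
have theta_ge0 : 0 <= theta by rewrite divr_ge0 ?ler0n ?ltW.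
apply: (@le_trans _ _
  (\sum_j ((if j \in z then a 0 j else 0) + (if j \in S then theta else 0)))).
  apply: ler_sum => j _; rewrite inE; have a_ge0 := chosen_eig_ge0 j.
  case: ifP => [lt_theta|_]; last by apply: addr_ge0; case: ifP.
  case: (j \in z) => /=; first by rewrite addr0.
  by rewrite add0r; case: eqP => [->|_] //=; exact: ltW.
rewrite big_split /= sum_eig_mem // -big_mkcond /= sumr_const mulr2n mulrDl mul1r.
apply: lerD; first exact: z_le.
apply: le_trans (ler_wpMn2l theta_ge0 card_le) _.
by rewrite -(mulr_natr theta) /theta divfK // pnatr_eq0 -lt0n.
Qed.

End Truncation.

Section ThresholdCompression.

Variables (n : nat) (rho U : 'M[C]_n) (lam : 'rV[R]_n).
Hypotheses (rho_state : state rho) (rho_eig : eigdec rho U lam).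

Local Notation V := (chosen_eig rho).1.
Local Notation a := (chosen_eig rho).2.

Lemma threshold_compress_weight delta : 0 < delta < 1 ->
  1 - trR (threshold_proj V a (delta / (trunc_rank rho delta)%:R) *m rho *m
           threshold_proj V a (delta / (trunc_rank rho delta)%:R)) <= 2 * delta.
Proof.
move=> delta01; have eig := chosen_eigP rho_eig.
apply: le_trans _ (small_eig_weight rho_state rho_eig delta01).
rewrite (trR_compress_threshold _ eig) -{1}(chosen_eig_sum rho_state rho_eig) -sumrB.
rewrite le_eqVlt; apply/orP; left; apply/eqP/eq_bigr => j _.
by rewrite ltNge; case: ifP; rewrite ?subrr ?subr0.
Qed.

Lemma sball_cqmx_compress k (B : 'I_k -> 'M[C]_n) (P : 'M[C]_n) (r : R) :
  (forall x, psdmx (B x)) -> \sum_x B x = rho -> adj P = P -> P *m P = P ->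
  0 <= r -> 2 * (1 - trR (P *m rho *m P)) <= r ^+ 2 ->
  sball r (cqmx B) (cqmx (fun x => P *m B x *m P)).
Proof.
move=> psdB sumB hermP idemP r_ge0 le_r.
have hermPt : adj ((1%:M : 'M_k) *t P) = 1%:M *t P by rewrite adj_tens adj1 hermP.
have idemPt : ((1%:M : 'M_k) *t P) *m (1%:M *t P) = 1%:M *t P.
  by rewrite tensmx_mul mul1mx idemP.
have compressE :
    (1%:M *t P) *m cqmx B *m (1%:M *t P) = cqmx (fun x => P *m B x *m P).
  by rewrite -{2}hermPt cqmx_sandwich hermP.
rewrite -compressE; apply: sball_compress => //.
  exact: cqmx_state psdB sumB rho_state.
by rewrite compressE /trR mxtrace_cqmx -mulmx_suml -mulmx_sumr sumB.
Qed.

End ThresholdCompression.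

Lemma smooth_Imax_cqmx_le n k (rho U : 'M[C]_n) (lam : 'rV[R]_n)
    (B : 'I_k -> 'M[C]_n) (delta r l : R) :
  state rho -> eigdec rho U lam -> (forall x, psdmx (B x)) -> \sum_x B x = rho ->
  0 < delta <= 1 / 4 -> 0 <= r -> 4 * delta <= r ^+ 2 ->
  (trunc_rank rho delta)%:R / delta <= 2 `^ l ->
  (Imax_s r (cqmx B) <= l%:E)%E /\ (Imax1_s r (cqmx B) <= l%:E)%E.
Proof.
move=> rho_state rho_eig psdB sumB /andP[delta_gt0 delta_le] r_ge0 le_r le_l.
have delta01 : 0 < delta < 1 by rewrite delta_gt0 /=; lra.
have weight := threshold_compress_weight rho_state rho_eig delta01.
have d_gt0 : (0 < trunc_rank rho delta)%N.
  by apply: (trunc_rank_gt0 rho_state rho_eig); rewrite ltW //=; lra.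
set theta := delta / _ in weight; set P := threshold_proj _ _ theta in weight.
have theta_gt0 : 0 < theta by rewrite divr_gt0 // ltr0n.
have le_theta : theta^-1 <= 2 `^ l by rewrite invf_div.
have eig := chosen_eigP rho_eig.
have hermP : adj P = P by exact: threshold_proj_herm.
have idemP : P *m P = P by exact: threshold_proj_idem eig.
set B' := fun x => P *m B x *m P.
have sumB' : \sum_x B' x = P *m rho *m P by rewrite -sumB mulmx_sumr mulmx_suml.
have psdB' x : psdmx (B' x) by exact: psdmx_compress.
have PB'P x : P *m B' x *m P = B' x by exact: compressK.
have le_thetaP : loewner_le (theta%:C *: P) (\sum_x B' x).
  by rewrite sumB'; exact: threshold_proj_le.
have near : sball r (cqmx B) (cqmx B').
  apply: (sball_cqmx_compress rho_state psdB sumB hermP idemP r_ge0).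
  by apply: le_trans _ le_r; lra.
split.
  apply: le_trans _ (Imax_cqmx_le psdB' hermP idemP PB'P theta_gt0 le_thetaP le_theta).
  by apply: ereal_inf_lbound; exists (cqmx B').
have t_le1 : trR (\sum_x B' x) <= 1.
  rewrite sumB'; have := trR_compress_le hermP idemP rho_state.1.
  by rewrite /trR rho_state.2.
have t_gt0 : 0 < trR (\sum_x B' x) by rewrite sumB'; lra.
apply: le_trans _ (Imax1_cqmx_le psdB' hermP idemP PB'P theta_gt0 le_thetaP t_gt0 _).
  by apply: ereal_inf_lbound; exists (cqmx B').
apply: le_trans _ le_theta; rewrite -[leRHS]mul1r ler_wpM2r // invr_ge0 ltW //.
Qed.

(** * Post-measurement states *)

Lemma psdmx_trE n (U L : 'M[C]_n) : psdmx L -> psdmx (trE U L).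
Proof.
move=> pL; have := psdmx_sandwich (adj U) (psdmx_trmx (psdmx_sandwich U pL)).
by rewrite adjK.
Qed.

Lemma trE_sum n k (U : 'M[C]_n) (F : 'I_k -> 'M[C]_n) :
  trE U (\sum_x F x) = \sum_x trE U (F x).
Proof.
by rewrite /trE mulmx_sumr mulmx_suml linear_sum /= mulmx_sumr mulmx_suml.
Qed.

Lemma trE1 n (U : 'M[C]_n) : U \is unitarymx -> trE U 1%:M = 1%:M.
Proof.
move=> /unitarymx_adj[UU U'U].
by rewrite /trE mulmx1 UU trmx1 mulmx1 U'U.
Qed.

(* [rho] is diagonal in the basis of [U], so it is fixed by that transpose. *)
Lemma mxtrace_trE_mul n (rho U L : 'M[C]_n) (lam : 'rV[R]_n) :
  eigdec rho U lam -> \tr (trE U L *m rho) = \tr (L *m rho).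
Proof.
move=> [/unitarymx_adj[UU _] ->].
rewrite /trE (mul_adj_conj _ _ UU) (mxtrace_adj_conj _ UU).
rewrite -mxtrace_tr trmx_mul trmxK tr_diag_mx [in RHS]mxtrace_mulC.
by rewrite mulmxA [LHS]mxtrace_mulC !mulmxA.
Qed.

Section PovmBlocks.

Variables (n k : nat) (rho U : 'M[C]_n) (lam : 'rV[R]_n) (Lam : 'I_k -> 'M[C]_n).
Hypotheses (rho_psd : psdmx rho) (rho_eig : eigdec rho U lam) (Lam_povm : povm Lam).

Definition povm_block x := sqrtm rho *m trE U (Lam x) *m sqrtm rho.

Let sqrt_rho := sqrtmP rho_psd.

Lemma povm_block_psd x : psdmx (povm_block x).
Proof.
rewrite /povm_block -{2}sqrt_rho.1.1; apply: psdmx_sandwich.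
apply: psdmx_trE; exact: Lam_povm.1.
Qed.

Lemma sum_povm_block : \sum_x povm_block x = rho.
Proof.
rewrite /povm_block -mulmx_suml -mulmx_sumr -trE_sum Lam_povm.2 (trE1 rho_eig.1).
by rewrite mulmx1 sqrt_rho.2.
Qed.

Lemma mxtrace_povm_block x : \tr (povm_block x) = \tr (Lam x *m rho).
Proof.
rewrite /povm_block -mulmxA mxtrace_mulC -mulmxA sqrt_rho.2.
by rewrite (mxtrace_trE_mul _ rho_eig) mxtrace_mulC.
Qed.

Lemma sigmaXR_cqmx : sigmaXR rho U Lam = cqmx povm_block.
Proof.
apply: eq_bigr => x _; congr (_ *t _).
rewrite /rhoxR scalerA -rmorphM -/(povm_block x).
have [PX0|PX_neq0] := eqVneq (PX rho Lam x) 0; last by rewrite mulfV // rmorph1 scale1r.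
suff -> : povm_block x = 0 by rewrite scaler0.
apply: psdmx_tr_eq0 (povm_block_psd x) _.
have trR_block : trR (povm_block x) = PX rho Lam x by rewrite /trR mxtrace_povm_block.
by rewrite (mxtrace_psdmx (povm_block_psd x)) trR_block PX0 rmorph0.
Qed.

End PovmBlocks.

Lemma Hmaxt_trunc_rank n (rho : 'M[C]_n) delta : (0 < trunc_rank rho delta)%N ->
  Hmaxt delta rho = (log2 (trunc_rank rho delta)%:R)%:E.
Proof. by rewrite lt0n /Hmaxt /trunc_rank /= => /negPf ->. Qed.

Lemma le_powR_of_ln (x l : R) : 0 < x -> ln x <= l * ln 2 -> x <= 2 `^ l.
Proof.
move=> x_gt0 le_l; rewrite /powR ifF ?pnatr_eq0 //.
by rewrite -[leLHS]lnK ?posrE // ler_expR.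
Qed.

Lemma rank_ratio_le_powR (d : nat) (eps c c' : R) :
  (0 < d)%N -> 0 < eps < 1 -> 0 < c -> - ln c <= (c' - 2) * - ln eps ->
  d%:R / (c * eps ^+ 2) <= 2 `^ (log2 d%:R + c' * `|log2 eps|).
Proof.
move=> d_gt0 /andP[eps_gt0 eps_lt1] c_gt0 le_c.
have ln2_gt0 : 0 < ln 2 :> R by rewrite ln_gt0 // ltr1n.
have ln_eps_lt0 : ln eps < 0 by rewrite ln_lt0 // eps_gt0.
apply: le_powR_of_ln; first by rewrite divr_gt0 ?ltr0n // mulr_gt0 // exprn_gt0.
have -> : `|log2 eps| = - (ln eps / ln 2).
  by rewrite ltr0_norm // /log2 pmulr_llt0 // invr_gt0.
rewrite lnM ?posrE ?invr_gt0 ?ltr0n ?mulr_gt0 ?exprn_gt0 //.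
rewrite lnV ?posrE ?mulr_gt0 ?exprn_gt0 // lnM ?posrE ?exprn_gt0 // lnXn //.
have -> : (log2 d%:R + c' * - (ln eps / ln 2)) * ln 2 = ln d%:R - c' * ln eps.
  by rewrite /log2; field; rewrite gt_eqF.
rewrite mulr2n; lra.
Qed.

Lemma smooth_Imax_sigmaXR_le_Hmaxt n k (rho U : 'M[C]_n) (lam : 'rV[R]_n)
    (Lam : 'I_k -> 'M[C]_n) (eps c c' r : R) :
  state rho -> eigdec rho U lam -> povm Lam -> 0 < eps <= 1 / 4 -> 0 < c <= 1 ->
  0 <= r -> 4 * (c * eps ^+ 2) <= r ^+ 2 -> - ln c <= (c' - 2) * - ln eps ->
  (Imax_s r (sigmaXR rho U Lam) <= Hmaxt (c * eps ^+ 2) rho + (c' * `|log2 eps|)%:E)%E /\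
  (Imax1_s r (sigmaXR rho U Lam) <= Hmaxt (c * eps ^+ 2) rho + (c' * `|log2 eps|)%:E)%E.
Proof.
move=> rho_state rho_eig Lam_povm /andP[eps_gt0 eps_le] /andP[c_gt0 c_le1] r_ge0 le_r le_c.
have eps01 : 0 < eps < 1 by rewrite eps_gt0 /=; lra.
have eps2_gt0 : 0 < eps ^+ 2 by rewrite exprn_gt0.
have eps2_le : eps ^+ 2 <= 1 / 4 by rewrite expr2; nra.
have delta_ok : 0 < c * eps ^+ 2 <= 1 / 4 by rewrite mulr_gt0 //=; nra.
have d_gt0 : (0 < trunc_rank rho (c * eps ^+ 2))%N.
  by apply: (trunc_rank_gt0 rho_state rho_eig); rewrite ltW //=; lra.
rewrite (Hmaxt_trunc_rank d_gt0) -EFinD (sigmaXR_cqmx rho_state.1 rho_eig Lam_povm).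
apply: (smooth_Imax_cqmx_le rho_state rho_eig _ _ delta_ok r_ge0 le_r).
- by move=> x; exact: povm_block_psd rho_state.1 Lam_povm x.
- exact: sum_povm_block rho_state.1 rho_eig Lam_povm.
- exact: rank_ratio_le_powR d_gt0 eps01 c_gt0 le_c.
Qed.

End MaxInformation.

Theorem lemma3 (R : realType) :
  (exists c1 c2 : R, 0 < c1 /\ 0 <= c2 /\
    forall (n k : nat) (rho U : 'M[R[i]]_n) (lam : 'rV[R]_n)
           (Lam : 'I_k -> 'M[R[i]]_n) (eps : R),
      state rho -> eigdec rho U lam -> povm Lam ->
      0 < eps <= 1 / 4 ->
      (Imax1_s eps (sigmaXR rho U Lam)
        <= Hmaxt (c1 * eps ^+ 2) rho + (c2 * `|log2 eps|)%:E)%E) /\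
  (exists d1 d2 d3 : R, 0 < d1 /\ 0 <= d2 /\ 0 <= d3 /\
    forall (n k : nat) (rho U : 'M[R[i]]_n) (lam : 'rV[R]_n)
           (Lam : 'I_k -> 'M[R[i]]_n) (eps eps' : R),
      state rho -> eigdec rho U lam -> povm Lam ->
      0 < eps <= 1 / 4 -> 0 < eps' <= Num.min (eps / 3) (1 / 4) ->
      (Imax_s (2 * eps) (sigmaXR rho U Lam)
        <= Hmaxt (d1 * eps ^+ 2) rho + (d2 * `|log2 eps|)%:E
           + (d3 * `|log2 (eps' ^+ 2 / 12)|)%:E)%E).
Proof.
split.
  exists (1 / 4), 3; do 2 (split; first lra).
  move=> n k rho U lam Lam eps rho_state rho_eig Lam_povm eps_ok.
  have /andP[eps_gt0 eps_le] := eps_ok.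
  have eps_ge0 := ltW eps_gt0.
  apply: (smooth_Imax_sigmaXR_le_Hmaxt rho_state rho_eig Lam_povm eps_ok _ eps_ge0 _ _).2.
  - by apply/andP; split; lra.
  - lra.
  have : ln eps <= ln (1 / 4) by rewrite ler_ln ?posrE //; lra.
  lra.
exists 1, 2, 0; do 3 (split; first lra).
move=> n k rho U lam Lam eps eps' rho_state rho_eig Lam_povm eps_ok _.
have /andP[eps_gt0 _] := eps_ok.
rewrite mul0r adde0.
apply: (smooth_Imax_sigmaXR_le_Hmaxt rho_state rho_eig Lam_povm eps_ok _ _ _ _).1.
- by apply/andP; split; lra.
- lra.
- by rewrite exprMn; lra.
- by rewrite ln1; lra.
Qed.
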